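(* Consider the firefighter game on the infinite square grid $\mathbb{L}_2=\mathbb{Z}\times\mathbb{Z}$ (described in the context) with an arbitrary ignition vertex. Say that a firefighter sequence $(f_i)_{i\geq 1}$ of non-negative integers satisfies the Condition if there exists $N\geq 1$ with $\sum_{i=1}^N f_i\geq 4N$. (a) (Offline.) For every firefighter sequence $(f_i)_{i\geq 1}$ satisfying the Condition, Player 1, knowing the entire sequence in advance, has a strategy that wins, i.e. contains the fire. (b) (Online.) The Condition is not sufficient for Player 1 to win the online version: for every online strategy of Player 1 there exists a firefighter sequence $(f_i)_{i\geq 1}$ satisfying the Condition against which that strategy loses. Moreover, 5 turns are enough to make any online strategy of Player 1 fail: such a sequence can be chosen so that the Condition holds with some $N\leq 5$ and $f_i=0$ for all $i>5$.
   Context: The grid $\mathbb{L}_2$ has vertex set $\mathbb{Z}\times\mathbb{Z}$, with $(x,y)$ adjacent to $(x',y')$ iff $|x-x'|+|y-y'|=1$. A fire starts at an ignition vertex $v$ at time $0$ (so $v$ is burning). A firefighter sequence is a sequence $(f_i)_{i\geq 1}$ of non-negative integers. At each turn $i\geq 1$: Player 1 chooses at most $f_i$ vertices that are neither burning nor protected and protects them (places a firefighter on each); then the fire spreads from every burning vertex to all of its unprotected neighbours. Once a vertex is burning or protected it remains so forever; unused firefighters are not carried over to later turns. Player 2 wins if at every turn some new vertex starts burning; otherwise (i.e. if at some turn no new vertex catches fire, so the fire is contained) Player 1 wins. In the offline version Player 1 knows the whole sequence $(f_i)_{i\geq 1}$ in advance. In the online version the sequence is chosen by Player 2 (the adversary)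 and only revealed turn by turn: at turn $i$ Player 2 reveals $f_i$ to Player 1 just before Player 1 places firefighters, so an online strategy of Player 1 chooses its moves at turn $i$ based only on $f_1,\dots,f_i$ and the history of the game so far. *)

From Stdlib Require Import ZArith List Arith Lia.
Import ListNotations.
Open Scope Z_scope.

Definition vertex := (Z * Z)%type.

Definition adj (u w : vertex) : Prop :=
  Z.abs (fst u - fst w) + Z.abs (snd u - snd w) = 1.

(* A firefighter sequence: f i is the number of firefighters at turn i (i >= 1);
   the value f 0 is irrelevant. *)
Definition ff_seq := nat -> nat.

(* Placements of Player 1: pl i = vertices protected at turn i (i >= 1);
   pl 0 is irrelevant. *)
Definition placements := nat -> list vertex.

(* At turn n+1: first the vertices pl (n+1) are protected, then the fire spreads
   from every burning vertex to all its unprotected neighbours. *)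
Fixpoint game_state (v : vertex) (pl : placements) (n : nat)
  : (vertex -> Prop) * (vertex -> Prop) :=
  match n with
  | O => (fun u => u = v, fun _ => False)
  | S m =>
      let B := fst (game_state v pl m) in
      let P := snd (game_state v pl m) in
      let P' := fun u => P u \/ In u (pl (S m)) in
      (fun u => B u \/ (~ P' u /\ exists w, B w /\ adj w u), P')
  end.

Definition burning (v : vertex) (pl : placements) (n : nat) : vertex -> Prop :=
  fst (game_state v pl n).
Definition protected (v : vertex) (pl : placements) (n : nat) : vertex -> Prop :=
  snd (game_state v pl n).

Definition legal_turn (f : ff_seq) (v : vertex) (pl : placements) (i : nat) : Prop :=
  (length (pl i) <= f i)%nat /\
  forall u, In u (pl i) ->
    ~ burning v pl (i - 1) u /\ ~ protected v pl (i - 1) u.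

Definition contained_at (v : vertex) (pl : placements) (n : nat) : Prop :=
  forall u, burning v pl n u -> burning v pl (n - 1) u.

Definition P1_wins (f : ff_seq) (v : vertex) (pl : placements) : Prop :=
  exists n : nat, (1 <= n)%nat /\
    (forall i : nat, (1 <= i <= n)%nat -> legal_turn f v pl i) /\
    contained_at v pl n.

Definition psum (f : ff_seq) (N : nat) : nat :=
  fold_right Nat.add 0%nat (map f (seq 1 N)).

Definition Condition (f : ff_seq) : Prop :=
  exists N : nat, (1 <= N)%nat /\ (4 * N <= psum f N)%nat.

(* Online strategy: placement at turn i as a function of [f 1; ...; f i]
   (the history of the game is determined by these and the strategy). *)
Definition online_strategy := list nat -> list vertex.

Definition online_play (sigma : online_strategy) (f : ff_seq) : placements :=
  fun i => sigma (map f (seq 1 i)).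

Definition online_legal (sigma : online_strategy) (v : vertex) : Prop :=
  forall (f : ff_seq) (i : nat), (1 <= i)%nat -> legal_turn f v (online_play sigma f) i.

(* (a) Over the first N turns Player 1 protects the 4N vertices at distance N from the
   ignition vertex v.  The fire advances by one unit of distance per turn, so it cannot reach
   them earlier, and at turn N it fills the ball of radius N - 1 and has nowhere to go.

   (b) The adversary reveals f_1 = 1 and looks at the vertex x protected at turn 1.  According
   to its position relative to v (absent or at distance >= 3, adjacent, diagonal, at distance 2
   on an axis) it chooses N = 2, 4, 3 or 5, reveals f_N = 4N - 1 and nothing else.  In each case
   there are 4N paths from v that avoid x, move away from v at unit speed up to a bounded delay,
   and are pairwise disjoint from time N on; the 4N - 1 firefighters of turn N miss one of them
   and the fire runs along it forever. *)

From Stdlib Require Import ZArith List Lia Classical FinFun.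
Import ListNotations.
Open Scope Z_scope.

(** * Fire dynamics *)

Lemma burning_0 v pl u : burning v pl 0 u <-> u = v.
Proof. reflexivity. Qed.

Lemma burning_S v pl m u : burning v pl (S m) u <->
  burning v pl m u \/
  (~ protected v pl (S m) u /\ exists w, burning v pl m w /\ adj w u).
Proof. reflexivity. Qed.

Lemma protected_S v pl m u :
  protected v pl (S m) u <-> protected v pl m u \/ In u (pl (S m)).
Proof. reflexivity. Qed.

Lemma protectedP v pl m u :
  protected v pl m u <-> exists i, (1 <= i <= m)%nat /\ In u (pl i).
Proof.
  induction m as [|m IH].
  - split; [intros []|intros (i & Hi & _); lia].
  - rewrite protected_S, IH. split.
    + intros [(i & Hi & Hu)|Hu]; [exists i|exists (S m)]; split; auto; lia.
    + intros (i & Hi & Hu). destruct (Nat.eq_dec i (S m)) as [->|Hne]; auto.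
      left. exists i. split; auto; lia.
Qed.

Lemma protected_mono v pl m m' u :
  (m <= m')%nat -> protected v pl m u -> protected v pl m' u.
Proof. rewrite !protectedP. intros Hm (i & Hi & Hu). exists i. split; auto; lia. Qed.

Lemma burning_mono v pl m m' u :
  (m <= m')%nat -> burning v pl m u -> burning v pl m' u.
Proof. induction 1; [auto|]. intros Hu. apply burning_S. auto. Qed.

Definition dist (u w : vertex) : Z := Z.abs (fst u - fst w) + Z.abs (snd u - snd w).

Lemma burning_dist v pl t u : burning v pl t u -> dist v u <= Z.of_nat t.
Proof.
  revert u; induction t as [|t IH]; intro u.
  - rewrite burning_0. intros ->. unfold dist. lia.
  - rewrite burning_S. intros [Hu|(_ & w & Hw & Hwu)].
    + apply IH in Hu. lia.
    + apply IH in Hw. unfold dist, adj in *. lia.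
Qed.

(* A vertex lit after turn [n] has a neighbour burning at time [n - 1] and was unprotected at
   turn [n], so it would already have been lit at turn [n]. *)
Lemma contained_forever v pl n : (1 <= n)%nat -> contained_at v pl n ->
  forall m u, (n <= m)%nat -> burning v pl m u -> burning v pl (n - 1) u.
Proof.
  intros Hn Hc m u Hm. revert u. induction Hm as [|m Hm IH]; intros u; [apply Hc|].
  rewrite burning_S. intros [Hu|(Hp & w & Hw & Hwu)]; [auto|].
  apply Hc. replace n with (S (n - 1)) by lia. apply burning_S. right. split.
  - intro Hpu. apply Hp. apply (protected_mono v pl n); [lia|].
    replace n with (S (n - 1)) by lia. exact Hpu.
  - exists w. auto.
Qed.

Lemma path_burns v pl (p : nat -> vertex) :
  p 0%nat = v -> (forall k, adj (p k) (p (S k))) ->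
  (forall k, ~ protected v pl (S k) (p (S k))) ->
  forall k, burning v pl k (p k).
Proof.
  intros H0 Hadj Hp k. induction k as [|k IH]; [apply burning_0; auto|].
  apply burning_S. right. split; [apply Hp|]. exists (p k). auto.
Qed.

Lemma closer_neighbour v u : u <> v -> exists w, adj w u /\ dist v w = dist v u - 1.
Proof.
  destruct u as [u1 u2], v as [v1 v2]. unfold adj, dist; cbn. intro Huv.
  destruct (Z.eq_dec u1 v1) as [->|Hne].
  - assert (u2 <> v2) by congruence.
    exists (v1, if v2 <? u2 then u2 - 1 else u2 + 1); cbn.
    destruct (Z.ltb_spec v2 u2); lia.
  - exists (if v1 <? u1 then u1 - 1 else u1 + 1, u2); cbn.
    destruct (Z.ltb_spec v1 u1); lia.
Qed.

Lemma ball_burns v pl t :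
  (forall u, protected v pl t u -> Z.of_nat t < dist v u) ->
  forall u, dist v u <= Z.of_nat t -> burning v pl t u.
Proof.
  induction t as [|t IH]; intros Hp u Hu.
  - apply burning_0. destruct u, v. unfold dist in Hu. cbn in Hu. f_equal; lia.
  - assert (IH' : forall u, dist v u <= Z.of_nat t -> burning v pl t u).
    { apply IH. intros w Hw. apply (protected_mono _ _ t (S t)) in Hw; [|lia].
      apply Hp in Hw. lia. }
    destruct (Z.le_gt_cases (dist v u) (Z.of_nat t)) as [Hle|Hgt].
    + apply (burning_mono v pl t); auto.
    + apply burning_S. right. split.
      * intro Hpu. apply Hp in Hpu. lia.
      * destruct (closer_neighbour v u) as (w & Hwu & Hw).
        { intros ->. unfold dist in Hgt. lia. }
        exists w. split; auto. apply IH'. lia.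
Qed.

(** * Rotations of the grid *)

Definition rot (u : vertex) : vertex := (- snd u, fst u).

Fixpoint rotn (q : nat) (u : vertex) : vertex :=
  match q with O => u | S q' => rot (rotn q' u) end.

Definition vadd (u w : vertex) : vertex := (fst u + fst w, snd u + snd w).
Definition vsub (u w : vertex) : vertex := (fst u - fst w, snd u - snd w).
Definition norm1 (u : vertex) : Z := Z.abs (fst u) + Z.abs (snd u).

Lemma adj_rotn q u w : adj u w -> adj (rotn q u) (rotn q w).
Proof. induction q as [|q IH]; cbn; auto. unfold adj, rot in *; cbn. lia. Qed.

Lemma adj_vadd v u w : adj u w -> adj (vadd v u) (vadd v w).
Proof. unfold adj, vadd; cbn. lia. Qed.

Lemma norm1_rotn q u : norm1 (rotn q u) = norm1 u.
Proof. induction q as [|q IH]; cbn; auto. rewrite <- IH. unfold norm1, rot; cbn. lia. Qed.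

Lemma rotn_inj q u w : rotn q u = rotn q w -> u = w.
Proof.
  induction q as [|q IH]; cbn; auto. intro E. apply IH.
  destruct (rotn q u), (rotn q w). unfold rot in E; cbn in E. injection E. intros. f_equal; lia.
Qed.

Lemma rotn_origin q : rotn q (0, 0) = (0, 0).
Proof. induction q as [|q IH]; cbn; [|rewrite IH]; reflexivity. Qed.

Lemma vadd_inj v u w : vadd v u = vadd v w -> u = w.
Proof. destruct u, w. unfold vadd; cbn. intro E. injection E. intros. f_equal; lia. Qed.

Lemma vadd_origin v : vadd v (0, 0) = v.
Proof. destruct v. unfold vadd; cbn. f_equal; lia. Qed.

Lemma vadd_vsub v u : vadd v (vsub u v) = u.
Proof. destruct u, v. unfold vadd, vsub; cbn. f_equal; lia. Qed.

Lemma dist_vadd v u : dist v (vadd v u) = norm1 u.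
Proof. unfold dist, vadd, norm1; cbn. lia. Qed.

Lemma rotn_sector_inj q q' a b a' b' :
  (q < 4)%nat -> (q' < 4)%nat -> 1 <= a -> 0 <= b -> 1 <= a' -> 0 <= b' ->
  rotn q (a, b) = rotn q' (a', b') -> q = q' /\ a = a' /\ b = b'.
Proof.
  intros Hq Hq' Ha Hb Ha' Hb'.
  destruct q as [|[|[|[|q]]]]; try lia; destruct q' as [|[|[|[|q']]]]; try lia;
    cbn; unfold rot; cbn; intro E; injection E; lia.
Qed.

Lemma sector_decomposition d : d <> (0, 0) ->
  exists q a b, (q < 4)%nat /\ 1 <= a /\ 0 <= b /\ d = rotn q (a, b).
Proof.
  destruct d as [x y]. intro Hd.
  assert (H : (1 <= x /\ 0 <= y) \/ (x <= 0 /\ 1 <= y) \/ (x <= -1 /\ y <= 0) \/ (0 <= x /\ y <= -1)).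
  { assert (x <> 0 \/ y <> 0) by (destruct (Z.eq_dec x 0), (Z.eq_dec y 0); subst; auto). lia. }
  destruct H as [H|[H|[H|H]]];
    [exists 0%nat, x, y | exists 1%nat, y, (- x) | exists 2%nat, (- x), (- y) | exists 3%nat, (- y), x];
    cbn; unfold rot; cbn; repeat split; try lia; f_equal; lia.
Qed.

(** * The offline strategy *)

Lemma NoDup_list_prod {A B : Type} (l : list A) (l' : list B) :
  NoDup l -> NoDup l' -> NoDup (list_prod l l').
Proof.
  induction 1 as [|a l Ha Hl IH]; intros Hl'; cbn; [constructor|].
  apply NoDup_app; auto.
  - apply Injective_map_NoDup; auto. intros x y E. congruence.
  - intros [a' b] H1 H2. apply in_map_iff in H1 as (b' & E & _). injection E as <- <-.
    apply in_prod_iff in H2. tauto.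
Qed.

Definition lanes (N : nat) : list (nat * nat) := list_prod (seq 0 4) (seq 0 N).

Lemma In_lanes N q i : In (q, i) (lanes N) <-> (q < 4 /\ i < N)%nat.
Proof. unfold lanes. rewrite in_prod_iff, !in_seq. lia. Qed.

Lemma NoDup_lanes N : NoDup (lanes N).
Proof. apply NoDup_list_prod; apply seq_NoDup. Qed.

Lemma length_lanes N : length (lanes N) = (4 * N)%nat.
Proof. unfold lanes. rewrite length_prod, !length_seq. reflexivity. Qed.

Definition sphere (v : vertex) (N : nat) : list vertex :=
  map (fun j => vadd v (rotn (fst j) (Z.of_nat N - Z.of_nat (snd j), Z.of_nat (snd j))))
    (lanes N).

Lemma length_sphere v N : length (sphere v N) = (4 * N)%nat.
Proof. unfold sphere. rewrite length_map. apply length_lanes. Qed.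

Lemma NoDup_sphere v N : NoDup (sphere v N).
Proof.
  apply Injective_map_NoDup_in; [|apply NoDup_lanes].
  intros [q i] [q' i'] Hj Hj' E. apply In_lanes in Hj, Hj'. cbn in E.
  apply vadd_inj, rotn_sector_inj in E as (-> & _ & E); lia || f_equal; lia.
Qed.

Lemma In_sphere v N u : (1 <= N)%nat -> In u (sphere v N) <-> dist v u = Z.of_nat N.
Proof.
  intro HN. unfold sphere. rewrite in_map_iff. split.
  - intros ([q i] & <- & Hj). apply In_lanes in Hj. cbn.
    rewrite dist_vadd, norm1_rotn. unfold norm1; cbn. lia.
  - intro Hd. destruct (sector_decomposition (vsub u v)) as (q & a & b & Hq & Ha & Hb & E).
    { unfold vsub, dist in *. destruct u, v; cbn in *. intro E; injection E. lia. }
    assert (Hab : a + b = Z.of_nat N).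
    { rewrite <- Hd, <- (vadd_vsub v u), dist_vadd, E, norm1_rotn. unfold norm1; cbn. lia. }
    exists (q, Z.to_nat b). split; [|apply In_lanes; lia].
    rewrite <- (vadd_vsub v u), E. cbn. do 3 f_equal; lia.
Qed.

Lemma psum_S f n : psum f (S n) = (psum f n + f (S n))%nat.
Proof.
  unfold psum. rewrite seq_S, map_app, fold_right_app. cbn.
  generalize (f (S n)). induction (map f (seq 1 n)) as [|x l IH]; intro a; cbn; [lia|].
  rewrite IH. lia.
Qed.

Lemma firstn_add {A : Type} a n (l : list A) :
  firstn (a + n) l = firstn a l ++ firstn n (skipn a l).
Proof.
  rewrite firstn_skipn_comm, <- (firstn_skipn a (firstn (a + n) l)) at 1.
  rewrite firstn_firstn, Nat.min_l by lia. reflexivity.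
Qed.

Lemma In_firstn {A : Type} n (l : list A) u : In u (firstn n l) -> In u l.
Proof. rewrite <- (firstn_skipn n l) at 2. intro Hu. apply in_or_app. auto. Qed.

Lemma In_skipn {A : Type} n (l : list A) u : In u (skipn n l) -> In u l.
Proof. rewrite <- (firstn_skipn n l) at 2. intro Hu. apply in_or_app. auto. Qed.

Lemma firstn_skipn_disjoint {A : Type} (l : list A) a u :
  NoDup l -> In u (firstn a l) -> ~ In u (skipn a l).
Proof.
  intros Hl Hu Hu'. rewrite <- (firstn_skipn a l) in Hl.
  apply in_split in Hu' as (l1 & l2 & E). rewrite E, app_assoc in Hl.
  apply NoDup_remove_2 in Hl. apply Hl. apply in_or_app. left. apply in_or_app. auto.
Qed.

Definition schedule (l : list vertex) (f : ff_seq) : placements :=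
  fun i => firstn (f i) (skipn (psum f (i - 1)) l).

Lemma protected_schedule v l f m u :
  protected v (schedule l f) m u <-> In u (firstn (psum f m) l).
Proof.
  induction m as [|m IH]; [split; [intros []|intros []]|].
  rewrite protected_S, IH, psum_S, firstn_add, in_app_iff.
  unfold schedule. rewrite Nat.sub_succ, Nat.sub_0_r. reflexivity.
Qed.

Lemma sphere_schedule_dist v f N i u :
  (1 <= N)%nat -> In u (schedule (sphere v N) f i) -> dist v u = Z.of_nat N.
Proof.
  intros HN Hu. apply (In_sphere v N u HN), (In_skipn (psum f (i - 1))), (In_firstn (f i)), Hu.
Qed.

Lemma sphere_schedule_legal v f N i :
  (1 <= i <= N)%nat -> legal_turn f v (schedule (sphere v N) f) i.
Proof.
  intro Hi. split; [apply firstn_le_length|]. intros u Hu. split.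
  - intro Hb. apply burning_dist in Hb. apply sphere_schedule_dist in Hu; lia.
  - rewrite protected_schedule. intro Hp.
    apply (firstn_skipn_disjoint _ _ u (NoDup_sphere v N) Hp), (In_firstn (f i)), Hu.
Qed.

Lemma sphere_schedule_contained v f N :
  (1 <= N)%nat -> (4 * N <= psum f N)%nat -> contained_at v (schedule (sphere v N) f) N.
Proof.
  intros HN Hsum u Hu. destruct N as [|t]; [lia|]. rewrite Nat.sub_succ, Nat.sub_0_r.
  rewrite burning_S in Hu. destruct Hu as [Hu|(Hp & w & Hw & Hwu)]; [exact Hu|].
  apply burning_dist in Hw. apply ball_burns.
  - intros x Hx. apply protectedP in Hx as (i & _ & Hx).
    apply sphere_schedule_dist in Hx; lia.
  - assert (dist v u <> Z.of_nat (S t)); [|unfold dist, adj in *; lia].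
    intro Hd. apply Hp. rewrite protected_schedule, firstn_all2.
    + apply In_sphere; auto.
    + rewrite length_sphere. exact Hsum.
Qed.

Theorem offline_wins v f : Condition f -> exists pl, P1_wins f v pl.
Proof.
  intros (N & HN & Hsum). exists (schedule (sphere v N) f), N.
  split; [exact HN|]. split.
  - intros i Hi. apply sphere_schedule_legal; auto.
  - apply sphere_schedule_contained; auto.
Qed.

(** * Escaping paths *)

Definition vertex_eq_dec (u w : vertex) : {u = w} + {u <> w}.
Proof. decide equality; apply Z.eq_dec. Defined.

Lemma pigeonhole {I : Type} (hit : vertex -> I -> Prop) (J : list I) (L : list vertex) :
  NoDup J -> (length L < length J)%nat ->
  (forall u j j', In j J -> In j' J -> hit u j -> hit u j' -> j = j') ->
  exists j, In j J /\ forall u, In u L -> ~ hit u j.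
Proof.
  revert L. induction J as [|j0 J IH]; intros L HJ Hlen Huniq; cbn in Hlen; [lia|].
  apply NoDup_cons_iff in HJ as [Hj0 HJ].
  destruct (classic (exists u, In u L /\ hit u j0)) as [(u0 & Hu0 & Hh0)|Hfree].
  - destruct (IH (remove vertex_eq_dec u0 L)) as (j & Hj & Hfree); auto.
    + pose proof (remove_length_lt vertex_eq_dec L u0 Hu0). lia.
    + intros u j j' Hj Hj'. apply Huniq; cbn; auto.
    + exists j. split; [cbn; auto|]. intros u Hu Hh.
      destruct (vertex_eq_dec u u0) as [->|Hne].
      * assert (j = j0) by (apply (Huniq u0); cbn; auto). subst. contradiction.
      * apply (Hfree u); auto. apply in_in_remove; auto.
  - exists j0. split; [cbn; auto|]. intros u Hu Hh. apply Hfree. eauto.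
Qed.

(* Turn [N] can block the tail of at most [length (pl N)] of the paths, and an unblocked
   path keeps the fire moving away from [v] forever. *)
Lemma fire_not_contained {I : Type} v pl N (J : list I) (P : I -> nat -> vertex) (c : nat) :
  NoDup J -> (length (pl N) < length J)%nat ->
  (forall j, In j J -> P j 0%nat = v) ->
  (forall j k, In j J -> adj (P j k) (P j (S k))) ->
  (forall j k, In j J -> Z.of_nat k <= dist v (P j k) + Z.of_nat c) ->
  (forall j i k, In j J -> (1 <= i)%nat -> i <> N -> ~ In (P j (S k)) (pl i)) ->
  (forall j j' k k', In j J -> In j' J -> (N <= k)%nat -> (N <= k')%nat ->
     P j k = P j' k' -> j = j') ->
  forall n, (1 <= n)%nat -> ~ contained_at v pl n.
Proof.
  intros HJ Hlen H0 Hadj Hesc Hother Htails n Hn Hc.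
  destruct (pigeonhole (fun u j => exists k, (N <= k)%nat /\ u = P j k) J (pl N))
    as (j & Hj & Hfree); auto.
  { intros u j j' Hj Hj' (k & Hk & ->) (k' & Hk' & E). eauto. }
  assert (Hburn : forall k, burning v pl k (P j k)).
  { apply path_burns; auto. intros k Hp. apply protectedP in Hp as (i & Hi & Hu).
    destruct (Nat.eq_dec i N) as [->|HiN].
    - apply (Hfree _ Hu). exists (S k). split; [lia|reflexivity].
    - apply (Hother j i k); auto; lia. }
  pose proof (contained_forever v pl n Hn Hc (n + c) _ ltac:(lia) (Hburn (n + c)%nat)) as Hm.
  apply burning_dist in Hm. specialize (Hesc j (n + c)%nat Hj). lia.
Qed.

Definition escaping (p : nat -> vertex) : Prop :=
  p 0%nat = (0, 0) /\ (forall k, adj (p k) (p (S k))) /\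
  (forall k, Z.of_nat k <= norm1 (p k) + 2).

Lemma escaping_rotn q p : escaping p -> escaping (fun k => rotn q (p k)).
Proof.
  intros (H0 & Hadj & Hesc). split; [rewrite H0; apply rotn_origin|]. split.
  - intro k. apply adj_rotn, Hadj.
  - intro k. rewrite norm1_rotn. apply Hesc.
Qed.

Definition escape_path (x : vertex) (p : nat -> vertex) : Prop :=
  escaping p /\ forall k, p (S k) <> x.

Definition escape_family (N : nat) (x : vertex) (G : nat * nat -> nat -> vertex) : Prop :=
  (forall j, In j (lanes N) -> escape_path x (G j)) /\
  (forall j j' k k', In j (lanes N) -> In j' (lanes N) -> (N <= k)%nat -> (N <= k')%nat ->
     G j k = G j' k' -> j = j').

Lemma escape_family_not_contained v pl N x s G :
  escape_family N x G -> (length (pl N) < 4 * N)%nat ->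
  (forall i u, (1 <= i)%nat -> i <> N -> In u (pl i) -> u = vadd v (rotn s x)) ->
  forall n, (1 <= n)%nat -> ~ contained_at v pl n.
Proof.
  intros [Hpaths Htails] Hlen Hother.
  apply (fire_not_contained v pl N (lanes N) (fun j k => vadd v (rotn s (G j k))) 2).
  - apply NoDup_lanes.
  - rewrite length_lanes. exact Hlen.
  - intros j Hj. destruct (Hpaths j Hj) as ((H0 & _) & _). rewrite H0, rotn_origin. apply vadd_origin.
  - intros j k Hj. destruct (Hpaths j Hj) as ((_ & Hadj & _) & _). apply adj_vadd, adj_rotn, Hadj.
  - intros j k Hj. destruct (Hpaths j Hj) as ((_ & _ & Hesc) & _).
    rewrite dist_vadd, norm1_rotn. apply Hesc.
  - intros j i k Hj Hi HiN Hu. destruct (Hpaths j Hj) as (_ & Hx).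
    apply Hother in Hu; auto. apply vadd_inj, rotn_inj in Hu. exact (Hx k Hu).
  - intros j j' k k' Hj Hj' Hk Hk' E. apply vadd_inj, rotn_inj in E. eauto.
Qed.

Definition on_lane (j : nat * nat) (u : vertex) : Prop :=
  exists a, 1 <= a /\ u = rotn (fst j) (a, Z.of_nat (snd j)).

Lemma escape_family_of_lanes N x G :
  (forall j, In j (lanes N) -> escape_path x (G j)) ->
  (forall j k, In j (lanes N) -> (N <= k)%nat -> on_lane j (G j k)) ->
  escape_family N x G.
Proof.
  intros Hpaths Hlane. split; auto. intros [q i] [q' i'] k k' Hj Hj' Hk Hk' E.
  destruct (Hlane _ k Hj Hk) as (a & Ha & Ea), (Hlane _ k' Hj' Hk') as (a' & Ha' & Ea').
  apply In_lanes in Hj, Hj'. cbn in Ea, Ea'. rewrite Ea, Ea' in E.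
  apply rotn_sector_inj in E as (-> & _ & E); try lia. f_equal. lia.
Qed.

Definition up_right (i : Z) (k : nat) : vertex :=
  let K := Z.of_nat k in if K <=? i then (0, K) else (K - i, i).

Definition right_up_right (r i : Z) (k : nat) : vertex :=
  let K := Z.of_nat k in
  if K <=? r - i then (K, 0) else if K <=? r then (r - i, K - (r - i)) else (K - i, i).

Definition bypass1 (k : nat) : vertex :=
  match k with
  | 0%nat => (0, 0) | 1%nat => (0, 1) | 2%nat => (1, 1) | 3%nat => (2, 1)
  | _ => (Z.of_nat k - 2, 0)
  end.

Definition bypass2 (k : nat) : vertex :=
  match k with
  | 0%nat => (0, 0) | 1%nat => (1, 0) | 2%nat => (1, 1) | 3%nat => (2, 1) | 4%nat => (3, 1)
  | _ => (Z.of_nat k - 2, 0)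
  end.

(* Leaves lane [i] just before [(m, i)] for the row [-1] (if [i = 0]) or [2] (if [i = 1]). *)
Definition detour (i m : Z) (k : nat) : vertex :=
  let K := Z.of_nat k in
  if K <=? m - 1 + i then up_right i k else (K - i - 1, if i =? 0 then -1 else 2).

Ltac case_ifs := repeat match goal with
  | |- context [if ?a <=? ?b then _ else _] => destruct (Z.leb_spec a b)
  | |- context [if ?a =? ?b then _ else _] => destruct (Z.eqb_spec a b)
  end.

Ltac coordinates :=
  unfold escaping, detour, up_right, right_up_right, adj, norm1 in *;
  rewrite ?Nat2Z.inj_succ in *; cbn [fst snd] in *; case_ifs; cbn [fst snd] in *;
  try lia; try (apply pair_equal_spec; lia).

Lemma up_right_escaping i : 0 <= i -> escaping (up_right i).
Proof. intros Hi. repeat split; intros; coordinates. Qed.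

Lemma right_up_right_escaping r i : 0 <= i <= r -> escaping (right_up_right r i).
Proof. intros Hi. repeat split; intros; coordinates. Qed.

Lemma detour_escaping i m : 0 <= i <= 1 -> 2 <= m -> escaping (detour i m).
Proof. intros Hi Hm. repeat split; intros; coordinates. Qed.

Lemma bypass1_escaping : escaping bypass1.
Proof.
  repeat split; intro k; do 4 (destruct k as [|k]; [cbn; unfold adj, norm1; cbn; lia|]);
    unfold bypass1, adj, norm1; rewrite ?Nat2Z.inj_succ; cbn [fst snd]; lia.
Qed.

Lemma bypass2_escaping : escaping bypass2.
Proof.
  repeat split; intro k; do 5 (destruct k as [|k]; [cbn; unfold adj, norm1; cbn; lia|]);
    unfold bypass2, adj, norm1; rewrite ?Nat2Z.inj_succ; cbn [fst snd]; lia.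
Qed.

Lemma up_right_lane i k : 0 <= i < Z.of_nat k -> up_right i k = (Z.of_nat k - i, i).
Proof. intros Hik. unfold up_right. destruct (Z.leb_spec (Z.of_nat k) i); [lia|reflexivity]. Qed.

Lemma right_up_right_lane r i k :
  0 <= i -> r <= Z.of_nat k -> right_up_right r i k = (Z.of_nat k - i, i).
Proof. intros Hi Hk. unfold right_up_right. case_ifs; f_equal; lia. Qed.

Lemma on_lane_rotn q i a : 1 <= a -> on_lane (q, i) (rotn q (a, Z.of_nat i)).
Proof. intros Ha. exists a. auto. Qed.

Ltac avoid_vertex :=
  cbv [rotn rot]; coordinates;
  let E := fresh "E" in intro E; apply pair_equal_spec in E; cbn [fst snd] in E; lia.

(* In frame 3, [up_right] would leave along the positive x-axis, through [(a, 0)]. *)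
Definition near_shape (N : nat) (bypass : nat -> vertex) (q i : nat) : nat -> vertex :=
  if (q =? 0)%nat then (if (i =? 0)%nat then bypass else up_right (Z.of_nat i))
  else if (q =? 3)%nat then right_up_right (Z.of_nat N) (Z.of_nat i)
  else up_right (Z.of_nat i).

Definition near_family N bypass (j : nat * nat) (k : nat) : vertex :=
  rotn (fst j) (near_shape N bypass (fst j) (snd j) k).

Lemma near_family_escapes N a bypass :
  (2 <= N)%nat -> 1 <= a -> escaping bypass -> (forall k, bypass (S k) <> (a, 0)) ->
  (forall k, (N <= k)%nat -> on_lane (0, 0)%nat (bypass k)) ->
  escape_family N (a, 0) (near_family N bypass).
Proof.
  intros HN Ha Hb Hbx Hbl. apply escape_family_of_lanes.
  - intros [q i] Hj. apply In_lanes in Hj. unfold near_family, near_shape; cbn [fst snd]. split.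
    + apply escaping_rotn.
      destruct (q =? 0)%nat, (i =? 0)%nat, (q =? 3)%nat;
        auto using up_right_escaping, right_up_right_escaping with zarith.
    + intro k. destruct q as [|[|[|[|q]]]]; try lia; [destruct i as [|i]; [apply Hbx|]|..];
        cbn [Nat.eqb]; avoid_vertex.
  - intros [q i] k Hj Hk. apply In_lanes in Hj. unfold near_family, near_shape; cbn [fst snd].
    destruct (Nat.eqb_spec q 0) as [->|Hq0];
      [destruct i as [|i]; cbn [Nat.eqb]; [apply Hbl; exact Hk|] | destruct (q =? 3)%nat];
      rewrite ?up_right_lane, ?right_up_right_lane by lia; apply on_lane_rotn; lia.
Qed.

Lemma bypass1_avoids k : bypass1 (S k) <> (1, 0).
Proof.
  do 4 (destruct k as [|k]; [cbn; congruence|]).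
  unfold bypass1. rewrite !Nat2Z.inj_succ. intro E. injection E. lia.
Qed.

Lemma bypass1_lane k : (4 <= k)%nat -> on_lane (0, 0)%nat (bypass1 k).
Proof.
  intro Hk. do 4 (destruct k as [|k]; [lia|]). exists (Z.of_nat k + 2).
  unfold bypass1. rewrite !Nat2Z.inj_succ. split; [lia|]. cbn. f_equal. lia.
Qed.

Lemma bypass2_avoids k : bypass2 (S k) <> (2, 0).
Proof.
  do 5 (destruct k as [|k]; [cbn; congruence|]).
  unfold bypass2. rewrite !Nat2Z.inj_succ. intro E. injection E. lia.
Qed.

Lemma bypass2_lane k : (5 <= k)%nat -> on_lane (0, 0)%nat (bypass2 k).
Proof.
  intro Hk. do 5 (destruct k as [|k]; [lia|]). exists (Z.of_nat k + 3).
  unfold bypass2. rewrite !Nat2Z.inj_succ. split; [lia|]. cbn. f_equal. lia.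
Qed.

Lemma neighbour_family_escapes : escape_family 4 (1, 0) (near_family 4 bypass1).
Proof.
  apply near_family_escapes; auto using bypass1_escaping, bypass1_avoids, bypass1_lane; lia.
Qed.

Lemma axis_family_escapes : escape_family 5 (2, 0) (near_family 5 bypass2).
Proof.
  apply near_family_escapes; auto using bypass2_escaping, bypass2_avoids, bypass2_lane; lia.
Qed.

Definition diag_shape (q i : nat) : nat -> vertex :=
  if andb (q =? 0)%nat (i =? 1)%nat then right_up_right 3 1 else up_right (Z.of_nat i).

Definition diag_family (j : nat * nat) (k : nat) : vertex :=
  rotn (fst j) (diag_shape (fst j) (snd j) k).

Lemma diag_family_escapes : escape_family 3 (1, 1) diag_family.
Proof.
  apply escape_family_of_lanes.
  - intros [q i] Hj. apply In_lanes in Hj. unfold diag_family, diag_shape; cbn [fst snd]. split.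
    + apply escaping_rotn. destruct (andb _ _).
      * apply right_up_right_escaping. lia.
      * apply up_right_escaping. lia.
    + intro k. destruct q as [|[|[|[|q]]]]; try lia; destruct i as [|[|[|i]]]; try lia;
        cbn [Nat.eqb andb]; avoid_vertex.
  - intros [q i] k Hj Hk. apply In_lanes in Hj. unfold diag_family, diag_shape; cbn [fst snd].
    destruct i as [|[|[|i]]], q as [|q]; try lia; cbn [Nat.eqb andb];
      rewrite ?up_right_lane, ?right_up_right_lane by lia; apply on_lane_rotn; lia.
Qed.

(* [rotn (4 - q) y] is [y] in the coordinates of frame [q]; the path on lane [i] of that
   frame makes a detour exactly when [y] lies on it, and since [norm1 y >= 3] the rows used
   by detours meet no other tail. *)
Definition far_shape (y : vertex) (q i : nat) : nat -> vertex :=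
  let z := rotn (4 - q) y in
  if snd z =? Z.of_nat i then
    if 2 <=? fst z then detour (Z.of_nat i) (fst z) else up_right (Z.of_nat i)
  else up_right (Z.of_nat i).

Definition far_family (y : vertex) (j : nat * nat) (k : nat) : vertex :=
  rotn (fst j) (far_shape y (fst j) (snd j) k).

Lemma far_family_escapes y : 3 <= norm1 y -> escape_family 2 y (far_family y).
Proof.
  destruct y as [y1 y2]. unfold norm1; cbn [fst snd]. intros Hy. split.
  - intros [q i] Hj. apply In_lanes in Hj. unfold far_family, far_shape; cbn [fst snd]. split.
    + apply escaping_rotn. case_ifs; auto using detour_escaping, up_right_escaping with zarith.
    + intro k. destruct q as [|[|[|[|q]]]], i as [|[|i]]; try lia;
        cbv [rotn rot Nat.sub]; cbn [fst snd Z.of_nat]; avoid_vertex.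
  - intros [q i] [q' i'] k k' Hj Hj' Hk Hk'. apply In_lanes in Hj, Hj'.
    unfold far_family, far_shape; cbn [fst snd].
    destruct q as [|[|[|[|q]]]], i as [|[|i]], q' as [|[|[|[|q']]]], i' as [|[|i']]; try lia;
      try reflexivity; cbv [rotn rot Nat.sub]; cbn [fst snd Z.of_nat]; avoid_vertex.
Qed.

(** * The online adversary *)

Lemma escape_family_exists d : d <> (0, 0) ->
  exists N s x G, (2 <= N <= 5)%nat /\ d = rotn s x /\ escape_family N x G.
Proof.
  intros Hd. destruct (Z_le_gt_dec 3 (norm1 d)) as [Hfar|Hnear].
  - exists 2%nat, 0%nat, d, (far_family d). split; [lia|split; [reflexivity|]].
    apply far_family_escapes, Hfar.
  - destruct (sector_decomposition d Hd) as (s & a & b & _ & Ha & Hb & ->).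
    rewrite norm1_rotn in Hnear. unfold norm1 in Hnear; cbn in Hnear.
    assert (H : (a = 1 /\ b = 0) \/ (a = 1 /\ b = 1) \/ (a = 2 /\ b = 0)) by lia.
    destruct H as [[-> ->]|[[-> ->]|[-> ->]]].
    + exists 4%nat, s, (1, 0), (near_family 4 bypass1).
      split; [lia|split; [reflexivity|apply neighbour_family_escapes]].
    + exists 3%nat, s, (1, 1), diag_family.
      split; [lia|split; [reflexivity|apply diag_family_escapes]].
    + exists 5%nat, s, (2, 0), (near_family 5 bypass2).
      split; [lia|split; [reflexivity|apply axis_family_escapes]].
Qed.

Definition adversary_seq (N : nat) : ff_seq :=
  fun i => if (i =? 1)%nat then 1%nat else if (i =? N)%nat then (4 * N - 1)%nat else 0%nat.

Lemma psum_adversary_seq N : (2 <= N)%nat -> psum (adversary_seq N) N = (4 * N)%nat.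
Proof.
  intros HN.
  assert (Hpre : forall m, (1 <= m < N)%nat -> psum (adversary_seq N) m = 1%nat).
  { induction m as [|m IH]; intros Hm; [lia|]. destruct m as [|m]; [reflexivity|].
    rewrite psum_S, IH by lia. unfold adversary_seq.
    destruct (Nat.eqb_spec (S (S m)) 1), (Nat.eqb_spec (S (S m)) N); lia. }
  destruct N as [|N]; [lia|]. rewrite psum_S, Hpre by lia. unfold adversary_seq.
  rewrite Nat.eqb_refl. destruct (Nat.eqb_spec (S N) 1); lia.
Qed.

Lemma adversary_seq_at_N N : (2 <= N)%nat -> adversary_seq N N = (4 * N - 1)%nat.
Proof. intros HN. unfold adversary_seq. rewrite Nat.eqb_refl. destruct (Nat.eqb_spec N 1); lia. Qed.

Lemma adversary_seq_elsewhere N i : i <> 1%nat -> i <> N -> adversary_seq N i = 0%nat.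
Proof.
  intros Hi1 HiN. unfold adversary_seq.
  destruct (Nat.eqb_spec i 1), (Nat.eqb_spec i N); congruence.
Qed.

Lemma online_first_move v sigma : online_legal sigma v ->
  (length (sigma [1%nat]) <= 1)%nat /\ ~ In v (sigma [1%nat]).
Proof.
  intros Hleg. destruct (Hleg (adversary_seq 2) 1%nat (le_n 1)) as [Hlen Hfresh].
  split; [exact Hlen|]. intro Hv. apply (proj1 (Hfresh v Hv)). reflexivity.
Qed.

Lemma online_loses v sigma N s x G :
  online_legal sigma v -> (2 <= N)%nat ->
  (forall u, In u (sigma [1%nat]) -> u = vadd v (rotn s x)) ->
  escape_family N x G ->
  ~ P1_wins (adversary_seq N) v (online_play sigma (adversary_seq N)).
Proof.
  intros Hleg HN Hx HG (n & Hn & _ & Hc). revert Hc.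
  assert (Hlen : forall i, (1 <= i)%nat ->
    (length (online_play sigma (adversary_seq N) i) <= adversary_seq N i)%nat).
  { intros i Hi. apply (Hleg _ i Hi). }
  apply (escape_family_not_contained v _ N x s G HG); [| |exact Hn].
  - specialize (Hlen N ltac:(lia)). rewrite adversary_seq_at_N in Hlen; lia.
  - intros i u Hi HiN Hu. destruct (Nat.eqb_spec i 1) as [->|Hi1]; [apply Hx, Hu|].
    specialize (Hlen i Hi). rewrite adversary_seq_elsewhere in Hlen by assumption.
    destruct (online_play sigma (adversary_seq N) i); [destruct Hu|cbn in Hlen; lia].
Qed.

Theorem online_fails v sigma : online_legal sigma v ->
  exists f : ff_seq,
    (exists N : nat, (1 <= N <= 5)%nat /\ (4 * N <= psum f N)%nat) /\
    (forall i : nat, (5 < i)%nat -> f i = 0%nat) /\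
    ~ P1_wins f v (online_play sigma f).
Proof.
  intros Hleg. destruct (online_first_move v sigma Hleg) as [Hlen Hv].
  assert (Hblock : exists N s x G, (2 <= N <= 5)%nat /\
    (forall u, In u (sigma [1%nat]) -> u = vadd v (rotn s x)) /\ escape_family N x G).
  { destruct (sigma [1%nat]) as [|u0 [|]]; cbn in Hlen; try lia.
    - exists 2%nat, 0%nat, (3, 0), (far_family (3, 0)).
      split; [lia|split; [intros u []|apply far_family_escapes; cbn; lia]].
    - destruct (escape_family_exists (vsub u0 v)) as (N & s & x & G & HN & Hd & HG).
      { intro E. apply Hv. left. rewrite <- (vadd_vsub v u0), E. apply vadd_origin. }
      exists N, s, x, G. split; [exact HN|split; [|exact HG]].
      intros u [<-|[]]. rewrite <- Hd. symmetry. apply vadd_vsub. }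
  destruct Hblock as (N & s & x & G & HN & Hx & HG).
  exists (adversary_seq N). split; [|split].
  - exists N. rewrite psum_adversary_seq; lia.
  - intros i Hi. apply adversary_seq_elsewhere; lia.
  - apply (online_loses v sigma N s x G); auto; lia.
Qed.

Theorem theorem1 :
  (* (a) offline *)
  (forall (v : vertex) (f : ff_seq),
      Condition f -> exists pl : placements, P1_wins f v pl)
  /\
  (* (b) online, with 5 turns *)
  (forall (v : vertex) (sigma : online_strategy),
      online_legal sigma v ->
      exists f : ff_seq,
        (exists N : nat, (1 <= N <= 5)%nat /\ (4 * N <= psum f N)%nat) /\
        (forall i : nat, (5 < i)%nat -> f i = 0%nat) /\
        ~ P1_wins f v (online_play sigma f)).
Proof.
  split; [exact offline_wins | exact online_fails].
Qed.
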